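(* Let $\mathbb{X},\mathbb{Y}$ be real normed linear spaces and let $F$ be a $k$-face of $B_{\mathbb{X}}$ for some $k\in\mathbb{N}$. If $T\in\mathbb{L}(\mathbb{X},\mathbb{Y})$ preserves TEA pairs contained in $F$ (i.e. for all $x,y\in F$, $(Tx,Ty)$ is a TEA pair in $\mathbb{Y}$), then either $T(F)=\{0\}$ or $\mathrm{Int}_r F\cap\ker T=\emptyset$.
   Context: A face of $B_{\mathbb{X}}$ is a nonempty convex subset $F\subset S_{\mathbb{X}}$ such that whenever $x_1,x_2\in S_{\mathbb{X}}$, $0<t<1$ and $(1-t)x_1+tx_2\in F$, then $x_1,x_2\in F$. $\mathrm{aff}(U)$ is the affine hull of $U$ and $\mathrm{Int}_r U=\{x\in U: \exists\varepsilon>0,\ \mathrm{aff}(U)\cap B(x,\varepsilon)\subset U\}$ is the relative interior. A $k$-face is a face whose affine hull has dimension $k$. $(x,y)$ is a TEA pair if $\|x+y\|=\|x\|+\|y\|$. *)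

From HB Require Import structures.
From mathcomp Require Import all_boot all_order all_algebra.
From mathcomp Require Import all_classical all_reals all_analysis.
Set Implicit Arguments. Unset Strict Implicit. Unset Printing Implicit Defensive.
Import Order.TTheory GRing.Theory Num.Theory.
Import numFieldNormedType.Exports.
Local Open Scope classical_set_scope.
Local Open Scope ring_scope.

Section Defs.
Context {R : realType} {X : normedModType R}.

Definition unit_sphere : set X := [set x | `|x| = 1].

Definition convex_set (F : set X) : Prop :=
  forall x y t, F x -> F y -> 0 <= t <= 1 -> F ((1 - t) *: x + t *: y).

Definition is_face (F : set X) : Prop :=
  [/\ F !=set0, F `<=` unit_sphere, convex_set F &
     forall x1 x2 t, unit_sphere x1 -> unit_sphere x2 -> 0 < t < 1 ->
       F ((1 - t) *: x1 + t *: x2) -> F x1 /\ F x2].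

Definition aff (U : set X) : set X :=
  [set z | exists n (p : 'I_n -> X) (c : 'I_n -> R),
      [/\ forall i, U (p i), \sum_(i < n) c i = 1 & z = \sum_(i < n) c i *: p i]].

Definition lin_indep (k : nat) (v : 'I_k -> X) : Prop :=
  forall c : 'I_k -> R, \sum_(i < k) c i *: v i = 0 -> forall i, c i = 0.

Definition affine_dim (A : set X) (k : nat) : Prop :=
  exists (x0 : X) (v : 'I_k -> X), lin_indep v /\
    A = [set x0 + \sum_(i < k) c i *: v i | c in [set: 'I_k -> R]].

Definition is_k_face (k : nat) (F : set X) : Prop :=
  is_face F /\ affine_dim (aff F) k.

Definition rel_int (U : set X) : set X :=
  [set x | U x /\ exists2 e : R, 0 < e & aff U `&` ball x e `<=` U].

End Defs.

Definition TEA {R : realType} {Y : normedModType R} (x y : Y) : Prop :=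
  `|x + y| = `|x| + `|y|.

From HB Require Import structures.
From mathcomp Require Import all_boot all_order all_algebra.
From mathcomp Require Import all_classical all_reals all_analysis.
From mathcomp Require Import lra.

Set Implicit Arguments.
Unset Strict Implicit.
Unset Printing Implicit Defensive.
Import Order.TTheory GRing.Theory Num.Theory.
Import numFieldNormedType.Exports.
Local Open Scope classical_set_scope.
Local Open Scope ring_scope.

(* If z lies in the relative interior of F and T z = 0 while T y <> 0 for some
   y in F, then pushing z slightly away from y along the line through y and z
   stays in F and yields w = (1 + t) z - t y with T w = - t T y.  The vectors
   - t T y and T y point in opposite directions, so they are not a TEA pair. *)

Section AffineHull.
Context {R : realType} {X : normedModType R}.

Lemma aff_line (U : set X) (z y : X) (s : R) :
  U z -> U y -> aff U ((1 - s) *: z + s *: y).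
Proof.
move=> Uz Uy; exists 2%N, (fun i : 'I_2 => if val i == 0%N then z else y),
  (fun i : 'I_2 => if val i == 0%N then 1 - s else s).
split; first by move=> i; case: ifP.
  by rewrite !big_ord_recr big_ord0 /= add0r subrK.
by rewrite !big_ord_recr big_ord0 /= add0r.
Qed.

Lemma rel_int_extrapolate (U : set X) (z y : X) :
  rel_int U z -> U y -> exists2 t : R, 0 < t & U ((1 + t) *: z - t *: y).
Proof.
move=> [Uz [e e0 sub_U]] Uy.
set d := `|z - y|; have d0 : 0 <= d := normr_ge0 _.
set t := e / (d + 1).
have t0 : 0 < t by rewrite divr_gt0 // ltr_wpDl.
have td : t * d < e.
  rewrite /t mulrAC ltr_pdivrMr ?ltr_wpDl // mulrDr mulr1.
  by rewrite ltrDl.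
exists t => //; apply: sub_U; split.
  have -> : (1 + t) *: z - t *: y = (1 - - t) *: z + (- t) *: y.
    by rewrite opprK scaleNr.
  exact: aff_line.
rewrite -ball_normE /ball_ /=.
have -> : z - ((1 + t) *: z - t *: y) = t *: (y - z).
  by rewrite scalerDl scale1r scalerBr opprB opprD addrCA addNKr.
by rewrite normrZ gtr0_norm // distrC.
Qed.

End AffineHull.

Lemma not_TEA_scaleN (R : realType) (Y : normedModType R) (t : R) (v : Y) :
  0 < t -> v != 0 -> ~ TEA (- t *: v) v.
Proof.
move=> t0 v0; rewrite /TEA.
have -> : - t *: v + v = (1 - t) *: v by rewrite scalerBl scale1r scaleNr addrC.
rewrite !normrZ normrN [`|t|]gtr0_norm // => h.
have : `|1 - t| < 1 + t by rewrite ltr_norml; apply/andP; split; lra.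
have v_gt0 : 0 < `|v| by rewrite normr_gt0.
by rewrite -(ltr_pM2r v_gt0) h mulrDl mul1r addrC ltxx.
Qed.

Theorem mainTheorem10 (R : realType) (X Y : normedModType R) (k : nat)
  (F : set X) (T : {linear X -> Y}) :
  is_k_face k F ->
  continuous T ->
  (forall x y, F x -> F y -> TEA (T x) (T y)) ->
  T @` F = [set 0] \/ rel_int F `&` (T @^-1` [set 0]) = set0.
Proof.
move=> [[[y0 Fy0] _ _ _] _] _ TEA_F.
have [[y Fy Ty0]|T_F0] := pselect (exists2 y, F y & T y != 0); last first.
  have T0 x : F x -> T x = 0.
    by move=> Fx; apply/eqP; apply: contra_notT T_F0 => Tx0; exists x.
  left; apply/seteqP; split => [_ [x Fx <-]|_ ->]; first by rewrite /= T0.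
  by exists y0; rewrite ?T0.
right; apply/seteqP; split => // z [Fz /= Tz].
have [t t0 Fw] := rel_int_extrapolate Fz Fy.
apply: (not_TEA_scaleN t0 Ty0).
have := TEA_F _ _ Fw Fy.
by rewrite linearB !linearZ /= Tz scaler0 add0r scalerN scaleNr.
Qed.
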